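(* Let $N\ge 1$ and $k\ge 1$ be integers, let $q^{(k)}_1,\ldots,q^{(k)}_{N^k}\in\Delta^{N}$ be arbitrary, and let $\mathcal{Q}^{(k)}:=\left(q^{(k)}_1,\ldots,q^{(k)}_{N^k}\right)$. For $i\in\{1,\ldots,N^{k-1}\}$ set $$Q^{(k)}_i:=\left(q^{(k)}_{N(i-1)+1},\,q^{(k)}_{N(i-1)+2},\,\ldots,\,q^{(k)}_{N(i-1)+N}\right)\in\mathbb{R}^{N\times N},$$ and let $$Q^{(k)}:=C_{N,N^{k-1}}\sum_{i=1}^{N^{k-1}}E_{N^{k-1},i}\otimes Q^{(k)}_i\in\mathbb{R}^{N^k\times N^k}$$ be the corresponding $k^{\text{th}}$ order transition matrix. Then $$Q^{(k)}=M^{(k)}_{k}\,C^{(k+1)}_{1}\,B^{(k)}_{k}\left(\mathcal{Q}^{(k)}\right)=C^{(k)}_{1}\,M^{(k)}_{k-1}\,B^{(k)}_{k}\left(\mathcal{Q}^{(k)}\right).$$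
   Context: $\Delta^{n}$ denotes the set of probability vectors in $\mathbb{R}^n$ (column vectors with nonnegative entries summing to $1$). $E_n$ is the $n\times n$ identity matrix, $e_{n,i}$ the $i$-th standard basis column vector of $\mathbb{R}^n$, $E_{n,i}:=e_{n,i}e_{n,i}^{T}$, $\mathbf{1}_n\in\mathbb{R}^n$ the all-ones vector, and $\otimes$ the Kronecker product. The commutation matrix is $C_{n,m}:=\sum_{i=1}^{m}e_{m,i}^{T}\otimes E_n\otimes e_{m,i}$ (an $nm\times nm$ permutation matrix). For integers $k\ge 0$ and $0\le m\le k$ (with $N$ fixed): the marginalization matrix is $M^{(k)}_m:=E_{N^m}\otimes\mathbf{1}_N^{T}\otimes E_{N^{k-m}}\in\mathbb{R}^{N^k\times N^{k+1}}$; for a tuple $\mathcal{Q}=(q_1,\ldots,q_{N^k})$ of vectors in $\Delta^N$, the branching matrix is $B^{(k)}_m(\mathcal{Q}):=\sum_{i=1}^{N^m}\sum_{j=1}^{N^{k-m}}E_{N^m,i}\otimes q_{N^{k-m}(i-1)+j}\otimes E_{N^{k-m},j}\in\mathbb{R}^{N^{k+1}\times N^k}$; the cycling matrix is $C^{(k)}_m:=C_{N^m,N^{k-m}}$. *)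

(* Kronecker product = tensmx (A *t B) from mathcomp real_closed mxtens,
   the standard row-major Kronecker product. *)
From mathcomp Require Import all_boot all_order all_algebra.
From mathcomp Require Import mxtens.
Set Implicit Arguments. Unset Strict Implicit. Unset Printing Implicit Defensive.
Import Order.TTheory GRing.Theory Num.Theory.
Local Open Scope ring_scope.

Notation "A *t B" := (tensmx A B)
  (at level 40, left associativity, format "A  *t  B") : ring_scope.

Lemma dimC_eq1 n m : (1 * n * m = n * m)%N. Proof. by rewrite mul1n. Qed.
Lemma dimC_eq2 n m : (m * n * 1 = n * m)%N. Proof. by rewrite muln1 mulnC. Qed.
Lemma dim_pow_split (N m k : nat) : (m <= k)%N -> (N ^ m * N ^ (k - m) = N ^ k)%N.
Proof. by move=> h; rewrite -expnD subnKC. Qed.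
Lemma dimM_eq1 (N m k : nat) : (m <= k)%N -> (N ^ m * 1 * N ^ (k - m) = N ^ k)%N.
Proof. by move=> h; rewrite muln1 dim_pow_split. Qed.
Lemma dimM_eq2 (N m k : nat) : (m <= k)%N -> (N ^ m * N * N ^ (k - m) = N ^ k.+1)%N.
Proof. by move=> h; rewrite -expnSr -expnD addSn subnKC. Qed.
Lemma dimQ_eq1 (N k : nat) : (0 < k)%N -> (N ^ k.-1 * N = N ^ k)%N.
Proof. by case: k => // k _; rewrite expnSr. Qed.

Section Defs.
Variable R : realFieldType.

Definition probvec (n : nat) (q : 'cV[R]_n) : Prop :=
  (forall i, 0 <= q i 0) /\ \sum_i q i 0 = 1.

Definition basis_col (n : nat) (i : 'I_n) : 'cV[R]_n := delta_mx i 0.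
Definition basis_mx (n : nat) (i : 'I_n) : 'M[R]_n := basis_col i *m (basis_col i)^T.

Definition commmx (n m : nat) : 'M[R]_(n * m) :=
  castmx (dimC_eq1 n m, dimC_eq2 n m)
    (\sum_(i < m) ((basis_col i)^T *t (1%:M : 'M[R]_n) *t basis_col i)).

Variable N : nat.

Definition margmx (k m : nat) (h : (m <= k)%N) : 'M[R]_(N ^ k, N ^ k.+1) :=
  castmx (dimM_eq1 N h, dimM_eq2 N h)
    ((1%:M : 'M[R]_(N ^ m)) *t (const_mx 1 : 'rV[R]_N) *t (1%:M : 'M[R]_(N ^ (k - m)))).

(* branching matrix B^{(k)}_m(Q) =
   sum_{i<N^m} sum_{j<N^{k-m}} E_{N^m,i} (x) q_{N^{k-m} i + j} (x) E_{N^{k-m},j}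
   (0-based; the tensor index (i,j) has value i * N^{k-m} + j) *)
Definition branchmx (k m : nat) (h : (m <= k)%N) (Q : 'I_(N ^ k) -> 'cV[R]_N)
  : 'M[R]_(N ^ k.+1, N ^ k) :=
  castmx (dimM_eq2 N h, dimM_eq1 N h)
    (\sum_(i < N ^ m) \sum_(j < N ^ (k - m))
       (basis_mx i *t Q (cast_ord (dim_pow_split N h) (mxtens_index (i, j)))
          *t basis_mx j)).

Definition cycmx (k m : nat) (h : (m <= k)%N) : 'M[R]_(N ^ k) :=
  castmx (dim_pow_split N h, dim_pow_split N h) (commmx (N ^ m) (N ^ (k - m))).

(* Q^{(k)}_i = (q_{N i}, ..., q_{N i + N - 1}) (0-based), an N x N matrix whose
   j-th column is q_{N i + j}; the tensor index (i, j) has value i * N + j *)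
Definition blockQ (k : nat) (hk : (0 < k)%N) (Q : 'I_(N ^ k) -> 'cV[R]_N)
  (i : 'I_(N ^ k.-1)) : 'M[R]_N :=
  \matrix_(r < N, c < N) Q (cast_ord (dimQ_eq1 N hk) (mxtens_index (i, c))) r 0.

Definition transmx (k : nat) (hk : (0 < k)%N) (Q : 'I_(N ^ k) -> 'cV[R]_N)
  : 'M[R]_(N ^ k) :=
  castmx (etrans (mulnC _ _) (dimQ_eq1 N hk), etrans (mulnC _ _) (dimQ_eq1 N hk))
    (commmx N (N ^ k.-1))
  *m castmx (dimQ_eq1 N hk, dimQ_eq1 N hk)
       (\sum_(i < N ^ k.-1) (basis_mx i *t blockQ hk Q i)).

End Defs.

From mathcomp Require Import all_boot all_order all_algebra.
From mathcomp Require Import mxtens.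
Import GRing.Theory Num.Theory.
Set Implicit Arguments. Unset Strict Implicit. Unset Printing Implicit Defensive.
Local Open Scope ring_scope.

(* Every matrix involved is a 0/1 pattern relating the base-N digit strings of
   the row and column indices (weighted by an entry of some q_j for the
   branching matrix), so each identity is an entrywise computation with [%/]
   and [%%].  The block-diagonal factor sum_i E_i (x) Q_i of Q^(k) equals
   M^(k)_(k-1) B^(k)_k, as both replace the last digit of a state j by a new
   digit t with weight q_j(t), and C_(N,N^(k-1)) is C^(k)_1; this is the second
   form.  The first follows from M^(k)_k C^(k+1)_1 = C^(k)_1 M^(k)_(k-1).
   The q_j need not be probability vectors. *)

Lemma eq_divmodn (x d a b : nat) : (b < d)%N ->
  ((x %/ d == a) && (x %% d == b))%N = (x == a * d + b)%N.
Proof.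
move=> lt_bd; have d_gt0 : (0 < d)%N := leq_ltn_trans (leq0n b) lt_bd.
by rewrite {3}(divn_eq x d) eq_addl_mul ?ltn_pmod // xpair_eqE.
Qed.

Section Entries.
Variable R : realFieldType.

Lemma sum_ord_only n v (lt_vn : (v < n)%N) (F : 'I_n -> R) :
  (forall x : 'I_n, (x : nat) != v -> F x = 0) -> \sum_x F x = F (Ordinal lt_vn).
Proof. by move=> F0; apply: big_only1 => // x; rewrite -val_eqE => /F0. Qed.

(* The entry of q at a natural-number index, 0 out of range; it lets entries of
   q be addressed by digits computed with [%/] and [%%]. *)
Definition colnth n (q : 'cV[R]_n) (t : nat) : R :=
  if insub t is Some r then q r 0 else 0.

Lemma colnthE n (q : 'cV[R]_n) (r : 'I_n) : colnth q r = q r 0.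
Proof. by rewrite /colnth valK. Qed.

Lemma basis_mxE n (i a b : 'I_n) : basis_mx R i a b = ((a == i) && (b == i))%:R.
Proof.
rewrite /basis_mx /basis_col !mxE big_ord1 !mxE.
by case: (a == i); case: (b == i); rewrite /= ?mulr1 ?mulr0 ?mul0r.
Qed.

Lemma commmxE n m (i j : 'I_(n * m)) :
  commmx R n m i j = ((i %/ m == j %% n) && (i %% m == j %/ n))%N%:R.
Proof.
rewrite /commmx castmxE summxE.
under eq_bigr => s _ do rewrite !mxE -!val_eqE /= divn1 modn1 !andbT.
have lt_in : (i %/ m < n)%N by exact: (mxtens_index_proof1 (m:=n) i).
have lt_jm : (j %/ n < m)%N by rewrite mulnC in j *; exact: (mxtens_index_proof1 j).
rewrite (divn_small lt_in) (modn_small lt_in) (sum_ord_only lt_jm) => [|s].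
  by rewrite /= !eqxx !mul1r -natrM mulnb andbC.
by rewrite eq_sym => /negbTE->; rewrite !mul0r.
Qed.

Variable N : nat.

Lemma margmxE k m (h : (m <= k)%N) (i : 'I_(N ^ k)) (j : 'I_(N ^ k.+1)) :
  margmx R N h i j = ((i %/ N ^ (k - m) == j %/ N ^ (k - m) %/ N)
     && (i %% N ^ (k - m) == j %% N ^ (k - m)))%N%:R.
Proof. by rewrite /margmx castmxE !mxE -!val_eqE /= divn1 mulr1 -natrM mulnb. Qed.

Lemma cycmxE k m (h : (m <= k)%N) (i j : 'I_(N ^ k)) :
  cycmx R N h i j = ((i %/ N ^ (k - m) == j %% N ^ m)
     && (i %% N ^ (k - m) == j %/ N ^ m))%N%:R.
Proof. by rewrite /cycmx castmxE commmxE. Qed.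

Lemma branchmxE k m (h : (m <= k)%N) (Q : 'I_(N ^ k) -> 'cV[R]_N)
    (i : 'I_(N ^ k.+1)) (j : 'I_(N ^ k)) :
  branchmx h Q i j = ((i %/ N ^ (k - m) %/ N == j %/ N ^ (k - m))
     && (i %% N ^ (k - m) == j %% N ^ (k - m)))%N%:R
   * colnth (Q j) (i %/ N ^ (k - m) %% N).
Proof.
set j' := cast_ord (esym (dim_pow_split N h)) j.
have lt_j1 : (j %/ N ^ (k - m) < N ^ m)%N := mxtens_index_proof1 j'.
have lt_j2 : (j %% N ^ (k - m) < N ^ (k - m))%N := mxtens_index_proof2 j'.
rewrite /branchmx castmxE summxE (sum_ord_only lt_j1) => [|a ja]; last first.
  rewrite summxE; apply: big1 => b _.
  rewrite mxE basis_mxE mxE basis_mxE -!val_eqE /=.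
  by move: ja; rewrite divn1 eq_sym => /negbTE->; rewrite andbF !mul0r.
rewrite summxE (sum_ord_only lt_j2) => [|b jb]; last first.
  rewrite mxE basis_mxE mxE basis_mxE -!val_eqE /=.
  by move: jb; rewrite eq_sym => /negbTE->; rewrite andbF mulr0.
rewrite mxE basis_mxE mxE basis_mxE -!val_eqE /= ord1 -colnthE /= divn1 !eqxx !andbT.
have -> : cast_ord (dim_pow_split N h) (mxtens_index (Ordinal lt_j1, Ordinal lt_j2)) = j.
  by apply: val_inj; rewrite /= -divn_eq.
by rewrite mulrAC -natrM mulnb.
Qed.
End Entries.

Section Factorization.
Variables (R : realFieldType) (N k : nat).
Hypotheses (N_gt0 : (0 < N)%N) (k_gt0 : (0 < k)%N).
Variable Q : 'I_(N ^ k) -> 'cV[R]_N.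

Let P := (N ^ k.-1)%N.
Let expnk : (N ^ k = P * N)%N. Proof. by rewrite dimQ_eq1. Qed.
Let subn_pred : (k - k.-1 = 1)%N. Proof. by rewrite -subn1 subKn. Qed.
Let P_gt0 : (0 < P)%N. Proof. by rewrite expn_gt0 N_gt0. Qed.

Lemma margmx_pred_branchmxE (x j : 'I_(N ^ k)) :
  (margmx R N (leq_pred k) *m branchmx (leqnn k) Q) x j
  = (x %/ N == j %/ N)%N%:R * colnth (Q j) (x %% N).
Proof.
have lt_xN := ltn_pmod x N_gt0.
have lt_y : (j * N + x %% N < N ^ k.+1)%N.
  by rewrite expnSr; apply: (mxtens_index_proof (j, Ordinal lt_xN)).
rewrite mxE (sum_ord_only lt_y) => [|y y_neq];
  rewrite margmxE branchmxE subn_pred subnn expn1 !divn1 !modn1 eqxx andbT /=.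
  have /andP[/eqP -> /eqP ->] : (((j * N + x %% N) %/ N == j) &&
      ((j * N + x %% N) %% N == x %% N))%N by rewrite eq_divmodn.
  by rewrite !eqxx andbT mul1r.
move: y_neq; rewrite -eq_divmodn // => /nandP[/negbTE-> | ].
  by rewrite mul0r mulr0.
by rewrite eq_sym => /negbTE->; rewrite andbF mul0r.
Qed.

Lemma sum_tens_blockQE (x j : 'I_(N ^ k)) :
  castmx (dimQ_eq1 N k_gt0, dimQ_eq1 N k_gt0)
    (\sum_(i < N ^ k.-1) (basis_mx R i *t blockQ k_gt0 Q i)) x j
  = (x %/ N == j %/ N)%N%:R * colnth (Q j) (x %% N).
Proof.
set j' := cast_ord (esym (dimQ_eq1 N k_gt0)) j.
have lt_j1 : (j %/ N < N ^ k.-1)%N := mxtens_index_proof1 j'.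
rewrite castmxE summxE (sum_ord_only lt_j1) => [|a ja];
  rewrite mxE basis_mxE mxE -!val_eqE /= -colnthE.
  have -> : cast_ord (dimQ_eq1 N k_gt0)
      (mxtens_index (Ordinal lt_j1, Ordinal (mxtens_index_proof2 j'))) = j.
    by apply: val_inj; rewrite /= -divn_eq.
  by rewrite eqxx andbT.
by move: ja; rewrite eq_sym => /negbTE->; rewrite andbF !mul0r.
Qed.

Lemma transmx_cycmx :
  transmx k_gt0 Q = cycmx R N k_gt0 *m (margmx R N (leq_pred k) *m branchmx (leqnn k) Q).
Proof.
rewrite /transmx; congr (_ *m _); apply/matrixP => i j.
  by rewrite castmxE commmxE cycmxE subn1 expn1.
by rewrite sum_tens_blockQE margmx_pred_branchmxE.
Qed.

Lemma margmx_cycmxE (i : 'I_(N ^ k)) (y : 'I_(N ^ k.+1)) :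
  (margmx R N (leqnn k) *m cycmx R N (ltn0Sn k)) i y
  = (i == (y %% N * P + y %/ N %/ N)%N :> nat)%:R.
Proof.
have lt_yN := ltn_pmod y N_gt0.
have lt_yNk : (y %/ N < N ^ k)%N by rewrite ltn_divLR // -expnSr.
have lt_x : (y %% N * N ^ k + y %/ N < N ^ k.+1)%N.
  by apply: leq_trans (mxtens_index_proof (Ordinal lt_yN, Ordinal lt_yNk)) _; rewrite expnS.
rewrite mxE (sum_ord_only lt_x) => [|x x_neq];
  rewrite margmxE cycmxE subnn subSS subn0 expn1 !divn1 !modn1 eqxx andbT /=.
  have /andP[/eqP -> /eqP ->] : (((y %% N * N ^ k + y %/ N) %/ N ^ k == y %% N) &&
      ((y %% N * N ^ k + y %/ N) %% N ^ k == y %/ N))%N by rewrite eq_divmodn.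
  suff -> : ((y %% N * N ^ k + y %/ N) %/ N = y %% N * P + y %/ N %/ N)%N.
    by rewrite !eqxx mulr1.
  by rewrite expnk mulnA divnMDl.
move: x_neq; rewrite -eq_divmodn // => /nandP[|] /negbTE->.
  by rewrite mulr0.
by rewrite andbF mulr0.
Qed.

Lemma cycmx_margmx_predE (i : 'I_(N ^ k)) (y : 'I_(N ^ k.+1)) :
  (cycmx R N k_gt0 *m margmx R N (leq_pred k)) i y
  = ((i %/ P == y %% N) && (i %% P == y %/ N %/ N))%N%:R.
Proof.
have lt_iP : (i %/ P < N)%N by rewrite ltn_divLR // mulnC -expnk.
have lt_z : (i %% P * N + i %/ P < N ^ k)%N.
  apply: leq_trans (mxtens_index_proof (Ordinal (ltn_pmod i P_gt0), Ordinal lt_iP)) _.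
  by rewrite expnk.
rewrite mxE (sum_ord_only lt_z) => [|z z_neq];
  rewrite cycmxE margmxE subn_pred subn1 expn1 -/P.
  have /andP[/eqP -> /eqP ->] : (((i %% P * N + i %/ P) %/ N == i %% P) &&
      ((i %% P * N + i %/ P) %% N == i %/ P))%N by rewrite eq_divmodn.
  by rewrite !eqxx mul1r andbC.
move: z_neq; rewrite -eq_divmodn // => /nandP[|] /negbTE.
  by rewrite (eq_sym _ (i %% P)%N) => ->; rewrite andbF mul0r.
by rewrite (eq_sym _ (i %/ P)%N) => ->; rewrite mul0r.
Qed.

(* Both sides send the digit string of y to that of i by moving its last digit
   to the front and dropping the digit that was second to last. *)
Lemma margmx_cycmx :
  margmx R N (leqnn k) *m cycmx R N (ltn0Sn k) = cycmx R N k_gt0 *m margmx R N (leq_pred k).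
Proof.
apply/matrixP => i y; rewrite margmx_cycmxE cycmx_margmx_predE eq_divmodn //.
by rewrite !ltn_divLR ?muln_gt0 ?P_gt0 // -expnk -expnSr.
Qed.
End Factorization.

Theorem proposition1 (R : realFieldType) (N k : nat) (hN : (0 < N)%N) (hk : (0 < k)%N)
  (Q : 'I_(N ^ k) -> 'cV[R]_N) (hQ : forall i, probvec (Q i)) :
  transmx hk Q
    = margmx R N (leqnn k) *m cycmx R N (ltn0Sn k) *m branchmx (leqnn k) Q
  /\ transmx hk Q
    = cycmx R N hk *m margmx R N (leq_pred k) *m branchmx (leqnn k) Q.
Proof. by split; rewrite (transmx_cycmx hN) ?margmx_cycmx // mulmxA. Qed.
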